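(* Let $m,n\ge 1$ and $t\ge 0$ be integers and define $K_0,\dots,K_n$ as in the context. If $K_i\le 2^{n-i}$ for all $1\le i\le n$, then $m\sum_{\ell=0}^{t}\binom{n}{\ell}\le 2^n$. Hence the smallest $n$ satisfying the condition of Theorem 2 is at least the smallest $n$ satisfying the sphere-packing (Hamming) bound $m\le 2^n/\sum_{\ell=0}^t\binom{n}{\ell}$.
   Context: Binomial coefficients with negative lower index are $0$. For $1\le i\le n$ put $A_{n-i}=\gcd\{\binom{n-i}{j}: t-i+1\le j\le t\}$ (equivalently the gcd of $\binom{n-i}{j}$ over $\max(0,t-i+1)\le j\le t$). Put $K_0=m\sum_{\ell=0}^{t}\binom{n}{\ell}$, and for $i=1,\dots,n$ define recursively $K_i$ to be the least integer such that $K_i\ge K_{i-1}/2$ and $K_i\equiv m\sum_{\ell=0}^{t}\binom{n-i}{\ell}\pmod{A_{n-i}}$. *)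

From HB Require Import structures.
From mathcomp Require Import all_boot all_order all_algebra.
Set Implicit Arguments. Unset Strict Implicit. Unset Printing Implicit Defensive.

Definition ball (n t : nat) : nat := \sum_(0 <= l < t.+1) 'C(n, l).

(* A_{n-i} = gcd { 'C(n-i, j) : max(0, t-i+1) <= j <= t }.
   In nat, t.+1 - i is the truncated value max(0, t-i+1). gcd of an empty
   family would be 0, but the range is nonempty for i >= 1. *)
Definition Aidx (n t i : nat) : nat :=
  \big[gcdn/0%N]_(t.+1 - i <= j < t.+1) 'C(n - i, j).

From HB Require Import structures.
From mathcomp Require Import all_boot all_order all_algebra.
Import Order.TTheory GRing.Theory Num.Theory.

(* Since 2 K_i >= K_{i-1}, iterating gives K_0 <= 2^n K_n, and the hypothesis
   at i = n says K_n <= 1. *)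

Set Implicit Arguments.
Unset Strict Implicit.

Local Open Scope ring_scope.

Lemma chain_le_expr_mul (R : numDomainType) (c : R) (K : nat -> R) (n : nat) :
  0 <= c -> (forall i, (0 < i <= n)%N -> K i.-1 <= c * K i) ->
  K 0%N <= c ^+ n * K n.
Proof.
move=> c_ge0 K_chain; elim: n K_chain => [|n IHn] K_chain; first by rewrite mul1r.
have K_le_n : forall i, (0 < i <= n)%N -> K i.-1 <= c * K i.
  by move=> i /andP[i_gt0 le_in]; apply: K_chain; rewrite i_gt0 (leqW le_in).
apply: le_trans (IHn K_le_n) _.
by rewrite exprSr -mulrA ler_wpM2l ?exprn_ge0 ?(K_chain n.+1) /=.
Qed.

Theorem theorem3 (m n t : nat) (K : nat -> int) :
  (1 <= m)%N -> (1 <= n)%N ->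
  K 0%N = (Posz (m * ball n t)) ->
  (forall i : nat, (1 <= i <= n)%N ->
     [/\ (K i.-1 <= 2 * K i)%R,
         (K i == (Posz (m * ball (n - i) t)) %[mod (Posz (Aidx n t i))])%Z
       & forall k : int, (K i.-1 <= 2 * k)%R ->
           (k == (Posz (m * ball (n - i) t)) %[mod (Posz (Aidx n t i))])%Z ->
           (K i <= k)%R]) ->
  (forall i : nat, (1 <= i <= n)%N -> (K i <= (Posz (2 ^ (n - i))))%R) ->
  (m * ball n t <= 2 ^ n)%N.
Proof.
move=> _ n_gt0 K0 K_spec K_bound.
have K_doubling : forall i, (0 < i <= n)%N -> K i.-1 <= 2 * K i.
  by move=> i /K_spec[].
have Kn_le1 : K n <= 1.
  by have := K_bound n; rewrite n_gt0 leqnn subnn; apply.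
have K0_le := chain_le_expr_mul (ler0n int 2) K_doubling.
have pow_bound : 2 ^+ n * K n <= 2 ^+ n.
  by rewrite -[leRHS]mulr1 ler_wpM2l ?exprn_ge0.
by rewrite -lez_nat -K0 -natz natrX (le_trans K0_le pow_bound).
Qed.
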